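(* Let $G$ be an infinite finitely generated residually finite group, $S$ a finite symmetric generating set, and $(X_n)_{n\ge0}$ the lazy random walk on $\mathrm{Cay}(G,S)$. Suppose there is a sequence of positive numbers $(p_k)_{k\ge2}$ with $\sum_{k\ge2}p_k<\infty$ and $\mathbb{P}(X_n\in\Lambda_k\setminus\{e\})\le p_k$ for all $n\ge1$ and $k\ge2$. Then $$\lim_{n\to\infty}\mathbb{E}[D_G(X_n)]=2+\sum_{k\ge2}\frac{1}{[G:\Lambda_k]}<\infty.$$
   Context: For $g\ne e$, $D_G(g)=\min\{[G:N]: N\lhd G\text{ of finite index},\ g\notin N\}$, and $D_G(e)=0$. For $k\ge2$, $\Lambda_k$ is the intersection of all normal subgroups of $G$ of index at most $k$. The lazy random walk on $\mathrm{Cay}(G,S)$ is the Markov chain with $X_0=e$ and transition matrix $\frac12 I+\frac12P$, where $P(x,y)=\frac1{|S|}\#\{s\in S:y=xs\}$. *)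

From HB Require Import structures.
From mathcomp Require Import all_boot all_order all_algebra.
From mathcomp Require Import all_classical all_reals all_analysis.
Set Implicit Arguments. Unset Strict Implicit. Unset Printing Implicit Defensive.
Import Order.TTheory GRing.Theory Num.Theory.

Definition group_axioms (G : eqType) (mul : G -> G -> G) (inv : G -> G) (e : G) : Prop :=
  [/\ (forall x y z, mul x (mul y z) = mul (mul x y) z),
      (forall x, mul e x = x), (forall x, mul x e = x),
      (forall x, mul (inv x) x = e) & (forall x, mul x (inv x) = e)].

Section AbstractGroup.
Variables (G : eqType) (mul : G -> G -> G) (inv : G -> G) (e : G).

Definition infinite_carrier : Prop := ~ exists l : seq G, forall g, g \in l.

Definition normal_subgroup (N : G -> Prop) : Prop :=
  [/\ N e, (forall x y, N x -> N y -> N (mul x y)), (forall x, N x -> N (inv x))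
    & (forall x g, N x -> N (mul (inv g) (mul x g)))].

(* [G : N] = k : there are k left cosets r_i N, i.e. every g lies in exactly
   one coset r_i N. *)
Definition has_index (N : G -> Prop) (k : nat) : Prop :=
  exists r : 'I_k -> G,
    forall g, exists i, N (mul (inv (r i)) g) /\
                       forall j, N (mul (inv (r j)) g) -> j = i.

Definition finite_index (N : G -> Prop) : Prop := exists k, has_index N k.

(* the index [G : N] as a natural number (0 if N has infinite index) *)
Definition gindex (N : G -> Prop) : nat :=
  match pselect (exists k, has_index N k) with
  | left h => ex_minn (P := fun k => `[< has_index N k >]) 
                (let: ex_intro k hk := h in ex_intro _ k (asboolT hk))
  | right _ => 0
  end.

Definition residually_finite : Prop :=
  forall g, g != e -> exists N, normal_subgroup N /\ finite_index N /\ ~ N g.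

Definition D_sep (g : G) (k : nat) : Prop :=
  exists N, normal_subgroup N /\ has_index N k /\ ~ N g.

Definition D_G (g : G) : nat :=
  if g == e then 0 else
  match pselect (exists k, D_sep g k) with
  | left h => ex_minn (P := fun k => `[< D_sep g k >])
                (let: ex_intro k hk := h in ex_intro _ k (asboolT hk))
  | right _ => 0
  end.

Definition Lambda (k : nat) (g : G) : Prop :=
  forall N, normal_subgroup N -> (exists j, (j <= k)%N /\ has_index N j) -> N g.

Definition sym_gen_set (S : seq G) : Prop :=
  [/\ uniq S, (forall s, s \in S -> inv s \in S)
    & (forall g, exists w : seq G, all (mem S) w /\ g = foldl mul e w)].

(* Lazy random walk X_n on Cay(G,S): X_0 = e, X_{n+1} = X_n * Y_{n+1} with
   i.i.d. increments Y equal to e w.p. 1/2 and to each s in S w.p. 1/(2|S|).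
   We encode an increment by i : 'I_(2|S|), uniformly distributed:
   i < |S| means "stay", otherwise step by S_(i-|S|). *)
Definition lazy_step (S : seq G) (i : nat) : G :=
  if (i < size S)%N then e else nth e S (i - size S).

Definition walk (S : seq G) (w : seq nat) : G :=
  foldl (fun x i => mul x (lazy_step S i)) e w.

Definition lazy_expect (R : realType) (S : seq G) (f : G -> R) (n : nat) : R :=
  (((2 * size S)%:R ^- n) *
   \sum_(w : n.-tuple 'I_(2 * size S)) f (walk S (map val w)))%R.

Definition lazy_prob (R : realType) (S : seq G) (A : G -> Prop) (n : nat) : R :=
  lazy_expect S (fun g => if `[< A g >] then 1%R else 0%R) n.

End AbstractGroup.

From HB Require Import structures.
From mathcomp Require Import all_boot all_order all_algebra.
From mathcomp Require Import all_classical all_reals all_analysis.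
From mathcomp Require Import ring lra.
Set Implicit Arguments. Unset Strict Implicit. Unset Printing Implicit Defensive.
Import Order.TTheory GRing.Theory Num.Theory.
Import numFieldNormedType.Exports.

(* Since [D_G(g) > k] exactly when [g] lies in [Lambda_k] minus [e], we have
   [E[D_G(X_n)] = sum_k P(X_n \in Lambda_k, X_n <> e)]. A normal subgroup of
   index at most [k] is determined by the action of the generators on its
   cosets, so [Lambda_k] has finite index; the walk projected to the cosets of
   a finite-index normal subgroup is lazy, irreducible and doubly stochastic,
   and a Doeblin minorization makes it equidistribute: [P(X_n \in N) -> 1/[G:N]].
   As [G] is infinite and residually finite, [[G:Lambda_k]] is unbounded, so
   [P(X_n = e) -> 0]. The summable bound [p_k] then allows passing to the limit
   termwise (Tannery's theorem), and [Lambda_0 = Lambda_1 = G] contribute [2]. *)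

Lemma infinite_uniq_seq (T : eqType) M : infinite_carrier T ->
  exists l : seq T, uniq l /\ size l = M.
Proof.
move=> T_inf; elim: M => [|M [l [l_uniq l_size]]]; first by exists [::].
have [x xl] : exists x, x \notin l.
  apply: contrapT => all_in; apply: T_inf; exists l => x.
  by apply/negPn/negP => xl; apply: all_in; exists x.
by exists (x :: l); rewrite /= xl l_uniq l_size.
Qed.

Section Tannery.
Variable R : realType.
Local Open Scope ring_scope.
Local Open Scope classical_set_scope.
Implicit Types (f p : nat -> R).

Lemma sumr_nat_ge0 f M N : (forall k, (M <= k)%N -> 0 <= f k) ->
  0 <= \sum_(M <= k < N) f k.
Proof.
by move=> f0; rewrite big_nat_cond; apply: sumr_ge0 => k /andP [/andP [/f0]].
Qed.

Lemma nondecreasing_partial_sums f M : (forall k, (M <= k)%N -> 0 <= f k) ->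
  nondecreasing_seq (fun N => \sum_(M <= k < N) f k).
Proof.
move=> f0; apply/nondecreasing_seqP => N.
have [MN|NM] := leqP M N; first by rewrite big_nat_recr //= lerDl f0.
by rewrite !big_geq // ltnW.
Qed.

Lemma cvg_sum_nat (a : nat -> nat -> R) (b : nat -> R) M N :
  (forall k, a n k @[n --> \oo] --> b k) ->
  \sum_(M <= k < N) a n k @[n --> \oo] --> \sum_(M <= k < N) b k.
Proof.
move=> ab; elim: N => [|N IH].
  by rewrite big_geq //; under eq_fun do rewrite big_geq //; exact: cvg_cst.
have [MN|NM] := leqP M N; last first.
  by rewrite big_geq //; under eq_fun do rewrite big_geq //; exact: cvg_cst.
by rewrite big_nat_recr //=; under eq_fun do rewrite big_nat_recr //=; exact: cvgD.
Qed.

Lemma tannery (a : nat -> nat -> R) (b p E : nat -> R) K0 :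
  cvg ((\sum_(K0 <= k < N) p k) @[N --> \oo]) ->
  (forall n k, 0 <= a n k) ->
  (\forall n \near \oo, forall k, (K0 <= k)%N -> a n k <= p k) ->
  (forall k, a n k @[n --> \oo] --> b k) ->
  (forall n, \forall K \near \oo, E n = \sum_(0 <= k < K) a n k) ->
  cvg ((\sum_(K0 <= k < N) b k) @[N --> \oo]) /\
  E n @[n --> \oo] --> \sum_(0 <= k < K0) b k + limn (fun N => \sum_(K0 <= k < N) b k).
Proof.
move=> pcvg a0 [n0 _ ap] ab hE.
have bp k : (K0 <= k)%N -> b k <= p k.
  by move=> k2; apply: (cvgr_to_le (ab k)); exists n0 => // n /= n1; exact: ap.
have p0 k : (K0 <= k)%N -> 0 <= p k.
  by move=> k2; apply: le_trans (ap n0 (leqnn _) k k2).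
set Ps := fun N => \sum_(K0 <= k < N) p k.
set Bs := fun N => \sum_(K0 <= k < N) b k.
have PsL N : Ps N <= limn Ps.
  by apply: nondecreasing_cvgn_le => //; exact: nondecreasing_partial_sums.
have BsPs N : Bs N <= Ps N by apply: ler_sum_nat => k /andP [/bp].
have Bcvg : cvgn Bs.
  apply: nondecreasing_is_cvgn.
    apply: nondecreasing_partial_sums => k _.
    by apply: (cvgr_to_ge (ab k)); exact: nearW.
  by exists (limn Ps) => _ [N _ <-]; exact: le_trans (BsPs N) (PsL N).
split; first exact: Bcvg.
have BsL N : Bs N <= limn Bs.
  apply: nondecreasing_cvgn_le => //; apply: nondecreasing_partial_sums => k _.
  by apply: (cvgr_to_ge (ab k)); exact: nearW.
apply/cvgrPdist_le => eps eps0.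
have e3 : 0 < eps / 3 by rewrite divr_gt0.
have /cvgrPdist_le /(_ _ e3) [K1 _ hK1] := pcvg.
pose K := maxn K1 K0.
have K0K : (K0 <= K)%N by rewrite leq_maxr.
have split_sum f N : (K <= N)%N ->
    \sum_(K0 <= k < N) f k = \sum_(K0 <= k < K) f k + \sum_(K <= k < N) f k.
  by move=> KN; rewrite (big_cat_nat K0K KN).
have p_tail N : (K <= N)%N -> \sum_(K <= k < N) p k <= eps / 3.
  move=> KN; have := PsL N; have := hK1 K (leq_maxl _ _).
  rewrite /Ps /= (split_sum _ _ KN) => /ler_normlW; lra.
have b_tail : limn Bs - Bs K <= eps / 3.
  suff : limn Bs <= Bs K + eps / 3 by lra.
  apply: (cvgr_to_le Bcvg); exists K => // N /= KN.
  rewrite /Bs (split_sum _ _ KN) lerD2l; apply: le_trans (p_tail N KN).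
  by apply: ler_sum_nat => k /andP [Kk _]; apply/bp/(leq_trans K0K).
have /cvgrPdist_le /(_ _ e3) [N1 _ hN1] := cvg_sum_nat (M := 0) (N := K) ab.
exists (maxn N1 n0) => // n /=; rewrite geq_max => /andP [N1n n0n].
have {}hN1 := hN1 n N1n; have [Kn _ hKn] := hE n.
have KnK : (K <= maxn Kn K)%N by rewrite leq_maxr.
rewrite (hKn (maxn Kn K)) /= ?leq_maxl // (big_cat_nat (leq0n K) KnK) /=.
have a_tail : 0 <= \sum_(K <= k < maxn Kn K) a n k <= eps / 3.
  rewrite sumr_nat_ge0 //=; apply: le_trans (p_tail _ KnK).
  by apply: ler_sum_nat => k /andP [Kk _]; apply/ap/(leq_trans K0K).
have b_head : \sum_(0 <= k < K) b k = \sum_(0 <= k < K0) b k + Bs K.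
  by rewrite (big_cat_nat (leq0n K0) K0K).
move: hN1 a_tail; rewrite b_head !ler_norml => /andP [h1 h2] /andP [t0 t1].
have := BsL K; rewrite -subr_ge0 => bK.
apply/andP; split; lra.
Qed.

End Tannery.

Section DoeblinConvergence.
Variables (R : realType) (m : nat).
Local Open Scope ring_scope.
Local Open Scope classical_set_scope.

Lemma weighted_sum_bounds (w x : 'I_m -> R) a b :
  (forall j, 0 <= w j) -> (forall j, a <= x j <= b) ->
  (\sum_j w j) * a <= \sum_j w j * x j <= (\sum_j w j) * b.
Proof.
move=> w0 hx; rewrite !mulr_suml; apply/andP; split; apply: ler_sum => j _;
  by apply: ler_wpM2l => //; case/andP: (hx j).
Qed.

Variables (v : nat -> 'I_m -> R) (Q : nat -> 'I_m -> 'I_m -> R) (L : nat) (d : R).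
Hypothesis v_step : forall t n j, v (t + n)%N j = \sum_j' Q t j j' * v n j'.
Hypothesis Q_ge0 : forall t j j', 0 <= Q t j j'.
Hypothesis Q_stochastic : forall t j, \sum_j' Q t j j' = 1.
Hypothesis Q_minorized : forall j j', d <= Q L j j'.
Hypothesis v_sum1 : forall n, \sum_j v n j = 1.
Hypothesis v0_bounded : forall j, 0 <= v 0%N j <= 1.

Let rho := 1 - m%:R * d.

Lemma doeblin_rho_ge0 : 0 <= rho.
Proof.
have [m0|m_gt0] := posnP m; first by rewrite /rho m0 mul0r subr0.
have : \sum_(j < m) d <= \sum_j Q L (Ordinal m_gt0) j by apply: ler_sum.
by rewrite Q_stochastic sumr_const card_ord -mulr_natl subr_ge0.
Qed.

Lemma doeblin_oscillation q : exists a b, b - a <= rho ^+ q /\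
  forall n, (q * L <= n)%N -> forall j, a <= v n j <= b.
Proof.
elim: q => [|q [a [b [hab hn]]]].
  exists 0, 1; split; first by rewrite subr0 expr0.
  move=> n _ j; rewrite -[n]addn0 v_step.
  by have := weighted_sum_bounds (Q_ge0 n j) v0_bounded; rewrite Q_stochastic mul1r mulr1.
exists (d + rho * a), (d + rho * b); split.
  have -> : d + rho * b - (d + rho * a) = rho * (b - a) by ring.
  by rewrite exprS ler_wpM2l // doeblin_rho_ge0.
move=> n hn' j.
have hLn : (L <= n)%N by apply: leq_trans hn'; rewrite mulSn leq_addr.
have hn2 : (q * L <= n - L)%N by rewrite leq_subRL // -mulSn.
rewrite -(subnKC hLn) v_step.
have -> : \sum_j' Q L j j' * v (n - L)%N j' =
    d + \sum_j' (Q L j j' - d) * v (n - L)%N j'.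
  rewrite [RHS]addrC -[X in _ = _ + X]mulr1 -(v_sum1 (n - L)%N) mulr_sumr -big_split /=.
  by apply: eq_bigr => j' _; ring.
have hw : \sum_j' (Q L j j' - d) = rho.
  by rewrite sumrB Q_stochastic sumr_const card_ord /rho mulr_natl.
have w0 j' : 0 <= Q L j j' - d by rewrite subr_ge0.
by have := weighted_sum_bounds w0 (hn _ hn2); rewrite hw !lerD2l.
Qed.

Hypothesis d_gt0 : 0 < d.

Lemma doeblin_cvg_uniform j0 : v n j0 @[n --> \oo] --> (m%:R^-1 : R).
Proof.
have m_gt0 : (0 < m)%N := leq_ltn_trans (leq0n _) (ltn_ord j0).
have rho_lt1 : `|rho| < 1.
  by rewrite ger0_norm ?doeblin_rho_ge0 // ltrBlDr ltrDl mulr_gt0 // ltr0n.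
apply/cvgrPdist_le => eps eps0.
have /cvgrPdist_le /(_ eps eps0) [q0 _ hq0] := cvg_expr rho_lt1.
have := hq0 q0 (leqnn _); rewrite /= sub0r normrN ger0_norm ?exprn_ge0 ?doeblin_rho_ge0 // => hq.
have [a [b [hab hn]]] := doeblin_oscillation q0.
exists (q0 * L)%N => // n /= hn'.
have hvn := hn n hn'.
have hm : m%:R * a <= 1 <= m%:R * b.
  have := weighted_sum_bounds (fun j : 'I_m => @ler01 R) hvn.
  under [X in _ <= X <= _]eq_bigr do rewrite mul1r.
  by rewrite v_sum1 sumr_const card_ord -mulr_natl mulr1.
have mpos : (0 : R) < m%:R by rewrite ltr0n.
have ha : a <= m%:R^-1 by rewrite -(ler_pM2l mpos) mulfV ?gt_eqF //; case/andP: hm.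
have hb : m%:R^-1 <= b by rewrite -(ler_pM2l mpos) mulfV ?gt_eqF //; case/andP: hm.
case/andP: (hvn j0) => h1 h2.
rewrite ler_norml; apply/andP; split; lra.
Qed.

End DoeblinConvergence.

Section FiniteSums.
Variable T : finType.
Local Open Scope ring_scope.

Lemma sum_tuple0 (V : nmodType) (F : 0.-tuple T -> V) : \sum_(w : 0.-tuple T) F w = F [tuple].
Proof. by rewrite (big_pred1 [tuple]) // => w; apply/esym/eqP/tuple0. Qed.

Lemma sum_tupleS (V : nmodType) n (F : n.+1.-tuple T -> V) :
  \sum_(w : n.+1.-tuple T) F w = \sum_(t : T) \sum_(w : n.-tuple T) F [tuple of t :: w].
Proof.
rewrite pair_big /= (reindex (fun p : T * n.-tuple T => [tuple of p.1 :: p.2])) //=.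
exists (fun w : n.+1.-tuple T => (thead w, [tuple of behead w])).
  by case=> t w _ /=; rewrite theadE; congr pair; apply: val_inj.
by move=> w _ /=; rewrite [RHS]tuple_eta.
Qed.

Lemma ord_tuple_of_seq n K (u : seq nat) : (0 < K)%N -> size u = n ->
  all (fun x => x < K)%N u -> exists w : n.-tuple 'I_K, map val w = u.
Proof.
move=> K_gt0 su uK; have su' : size (map (insubd (Ordinal K_gt0)) u) == n by rewrite size_map su.
exists (Tuple su'); rewrite /= -map_comp; apply: map_id_in => x xu /=.
by rewrite val_insubd (allP uK).
Qed.

Lemma sum_delta (R : pzSemiRingType) (a : T) : \sum_(i : T) ((a == i)%:R : R) = 1.
Proof. by rewrite (bigD1 a) //= eqxx big1 ?addr0 // => i /negPf; rewrite eq_sym => ->. Qed.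

End FiniteSums.

Section GroupTheory.
Variables (G : eqType) (mul : G -> G -> G) (inv : G -> G) (e : G).
Hypothesis ga : group_axioms mul inv e.

Lemma mulgA x y z : mul x (mul y z) = mul (mul x y) z. Proof. by case: ga. Qed.
Lemma mul1g x : mul e x = x. Proof. by case: ga. Qed.
Lemma mulg1 x : mul x e = x. Proof. by case: ga. Qed.
Lemma mulVg x : mul (inv x) x = e. Proof. by case: ga. Qed.
Lemma mulgV x : mul x (inv x) = e. Proof. by case: ga. Qed.

Lemma mulKg x y : mul (inv x) (mul x y) = y.
Proof. by rewrite mulgA mulVg mul1g. Qed.

Lemma mulKVg x y : mul x (mul (inv x) y) = y.
Proof. by rewrite mulgA mulgV mul1g. Qed.

Lemma mulgI x : injective (mul x).
Proof. by move=> y z h; rewrite -(mulKg x y) h mulKg. Qed.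

Lemma invgK : involutive inv.
Proof. by move=> x; rewrite -[RHS](mulKg (inv x)) mulVg mulg1. Qed.

Lemma invMg x y : inv (mul x y) = mul (inv y) (inv x).
Proof. by apply: (@mulgI (mul x y)); rewrite mulgV -mulgA (mulgA y) mulgV mul1g mulgV. Qed.

Lemma invg1 : inv e = e.
Proof. by rewrite -[LHS]mul1g mulgV. Qed.

Lemma foldl_mul x w : foldl mul x w = mul x (foldl mul e w).
Proof.
elim: w x => [|s w IH] x /=; first by rewrite mulg1.
by rewrite IH [in RHS]IH mul1g mulgA.
Qed.

Definition coset_reps (N : G -> Prop) m (r : 'I_m -> G) : Prop :=
  forall g, exists i, N (mul (inv (r i)) g) /\
                     forall j, N (mul (inv (r j)) g) -> j = i.

Section NormalSubgroup.
Variable N : G -> Prop.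
Hypothesis nN : normal_subgroup mul inv e N.

Lemma normal1 : N e. Proof. by case: nN. Qed.
Lemma normalM x y : N x -> N y -> N (mul x y). Proof. by case: nN => _ h _ _; apply: h. Qed.
Lemma normalV x : N x -> N (inv x). Proof. by case: nN => _ _ h _; apply: h. Qed.
Lemma normalJ x g : N x -> N (mul (inv g) (mul x g)). Proof. by case: nN => _ _ _ h; apply: h. Qed.

Lemma coset_refl x : N (mul (inv x) x).
Proof. by rewrite mulVg; exact: normal1. Qed.

Lemma coset_sym x y : N (mul (inv x) y) -> N (mul (inv y) x).
Proof. by move/normalV; rewrite invMg invgK. Qed.

Lemma coset_trans x y z : N (mul (inv x) y) -> N (mul (inv y) z) -> N (mul (inv x) z).
Proof. by move=> xy /(normalM xy); rewrite -mulgA mulKVg. Qed.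

Lemma coset_mulr x y z : N (mul (inv x) y) -> N (mul (inv (mul x z)) (mul y z)).
Proof. by move/(normalJ z); rewrite invMg -!mulgA (mulgA (inv x)). Qed.

Lemma has_index0 : ~ has_index mul inv N 0.
Proof. by case=> r /(_ e) [[]]. Qed.

Lemma has_index1 g : has_index mul inv N 1 -> N g.
Proof.
case=> r hr; have [i [Ne _]] := hr e; have [j [Ng _]] := hr g.
rewrite (ord1 i) in Ne; rewrite (ord1 j) in Ng.
by have := coset_trans (coset_sym Ne) Ng; rewrite invg1 mul1g.
Qed.

Section CosetIndex.
Variables (m : nat) (r : 'I_m -> G).
Hypothesis hr : coset_reps N r.

Definition coset_idx (g : G) : 'I_m := projT1 (cid (hr g)).

Lemma coset_idxP g : N (mul (inv (r (coset_idx g))) g).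
Proof. by rewrite /coset_idx; case: cid => i /= []. Qed.

Lemma coset_idx_uniq g i : N (mul (inv (r i)) g) -> i = coset_idx g.
Proof. by rewrite /coset_idx; case: cid => j /= [_]; apply. Qed.

Lemma eq_coset_idx x y : coset_idx x = coset_idx y <-> N (mul (inv x) y).
Proof.
split=> [xy|/(coset_trans (coset_idxP x))/coset_idx_uniq //].
by have := coset_idxP y; rewrite -xy; apply: coset_trans (coset_sym (coset_idxP x)).
Qed.

Lemma coset_idx_rep i : coset_idx (r i) = i.
Proof. by apply/esym/coset_idx_uniq/coset_refl. Qed.

Lemma coset_idx_mulr x y z : coset_idx x = coset_idx y -> coset_idx (mul x z) = coset_idx (mul y z).
Proof. by move/eq_coset_idx/coset_mulr/eq_coset_idx. Qed.

Lemma coset_idx_mulr_bij z i : exists! j, coset_idx (mul (r j) z) = i.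
Proof.
have inj : injective (fun j => coset_idx (mul (r j) z)).
  move=> j j' /(coset_idx_mulr (inv z)).
  by rewrite -!mulgA !mulgV !mulg1 !coset_idx_rep.
exists (invF inj i); split; first by rewrite (f_invF inj).
by move=> j <-; rewrite (invF_f inj).
Qed.

End CosetIndex.

Lemma has_index_le m1 m2 : has_index mul inv N m1 -> has_index mul inv N m2 -> (m1 <= m2)%N.
Proof.
move=> [r1 h1] [r2 h2].
have inj : injective (fun i => coset_idx h2 (r1 i)).
  move=> i j /eq_coset_idx /(eq_coset_idx h1).
  by rewrite !coset_idx_rep.
by have := leq_card _ inj; rewrite !card_ord.
Qed.

Lemma gindexE m : has_index mul inv N m -> gindex mul inv N = m.
Proof.
move=> hm; rewrite /gindex; case: pselect => [[k hk]|[]]; last by exists m.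
case: ex_minnP => j /asboolP hj _.
by apply/eqP; rewrite eqn_leq !has_index_le.
Qed.

End NormalSubgroup.

Local Notation Lam k := (Lambda mul inv e k).

Lemma Lambda_normal k : normal_subgroup mul inv e (Lam k).
Proof.
split=> [N nN _|x y hx hy N nN hN|x hx N nN hN|x g hx N nN hN].
- exact: normal1.
- exact: normalM (hx N nN hN) (hy N nN hN).
- exact: normalV (hx N nN hN).
- exact: normalJ (hx N nN hN).
Qed.

Lemma Lambda_le1 k g : (k <= 1)%N -> Lam k g.
Proof.
move=> k1 N nN [j [jk hj]]; have := leq_trans jk k1.
case: j hj {jk} => [|[|//]] hj _; first by case: (has_index0 hj).
exact: has_index1 hj.
Qed.

Lemma gindex_Lambda_le1 k : (k <= 1)%N -> gindex mul inv (Lam k) = 1%N.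
Proof.
move=> k1; apply: (gindexE (Lambda_normal k)).
exists (fun _ => e) => g; exists ord0; split; first exact: Lambda_le1.
by move=> j _; rewrite (ord1 j).
Qed.

Lemma has_index_of_fibers (H : G -> Prop) (T : finType) (F : G -> T) :
  (forall g h, F g = F h <-> H (mul (inv g) h)) -> finite_index mul inv H.
Proof.
move=> hF; pose A := [set t | `[< exists g, F g = t >]].
pose pre t := if pselect (exists g, F g = t) is left h then projT1 (cid h) else e.
have preP t : t \in A -> F (pre t) = t.
  by rewrite inE => /asboolP ex; rewrite /pre; case: pselect => // h; case: cid.
exists #|A|, (fun i => pre (enum_val i)) => g.
have gA : F g \in A by rewrite inE; apply/asboolP; exists g.
exists (enum_rank_in gA (F g)); split.
  by apply/hF; rewrite preP ?enum_valP // enum_rankK_in.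
move=> j /hF; rewrite preP ?enum_valP // => ej.
by apply: (@enum_val_inj _ A); rewrite ej enum_rankK_in.
Qed.

Section ResiduallyFinite.
Hypothesis rf : residually_finite mul inv e.

Lemma ltn_D_G g k : g != e -> (k < D_G mul inv e g)%N <-> Lam k g.
Proof.
move=> ge; rewrite /D_G (negPf ge); case: pselect => [[k0 hk0]|[]]; last first.
  by have [N [nN [[j hj] Ng]]] := rf ge; exists j, N.
case: ex_minnP => d /asboolP [N [nN [hd Ng]]] dmin; split=> [kd|hL].
  move=> N' nN' [j [jk hj]]; apply: contrapT => N'g.
  have : (d <= j)%N by apply/dmin/asboolP; exists N'.
  by move/leq_trans/(_ jk); rewrite leqNgt kd.
by rewrite ltnNge; apply/negP => dk; apply: Ng; apply: hL nN _; exists d.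
Qed.

End ResiduallyFinite.

Section LambdaFiniteIndex.
Variables (S : seq G) (k : nat).
Hypothesis S_gen : forall g, exists w, all (mem S) w /\ g = foldl mul e w.

(* A normal subgroup of index [j <= k], with coset representatives [r], is
   recorded by the right action of each generator on the [j] cosets (padded
   to ['I_k]) and by the coset of [e]; the cosets of [g] under all recorded
   subgroups determine [g] modulo [Lam k]. *)
Definition coset_code := ({ffun 'I_(size S) -> {ffun 'I_k -> 'I_k}} * 'I_k)%type.

Definition code_step (d : coset_code) (x : 'I_k) (s : G) : 'I_k :=
  if insub (index s S) is Some t then d.1 t x else x.

Definition word_of g := projT1 (cid (S_gen g)).

Lemma word_ofP g : all (mem S) (word_of g) /\ g = foldl mul e (word_of g).
Proof. by rewrite /word_of; case: cid. Qed.

Definition code_run (d : coset_code) g := foldl (code_step d) d.2 (word_of g).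

Definition code_of (d : coset_code) N j (r : 'I_j -> G) (hr : coset_reps N r)
    (jk : (j <= k)%N) : Prop :=
  d.2 = widen_ord jk (coset_idx hr e) /\
  forall t i, d.1 t (widen_ord jk i) = widen_ord jk (coset_idx hr (mul (r i) (nth e S t))).

Definition is_code (d : coset_code) : Prop :=
  exists N j (r : 'I_j -> G) (hr : coset_reps N r) (jk : (j <= k)%N),
    normal_subgroup mul inv e N /\ code_of d hr jk.

Section CodeOf.
Variables (d : coset_code) (N : G -> Prop) (j : nat) (r : 'I_j -> G).
Variables (hr : coset_reps N r) (jk : (j <= k)%N).
Hypotheses (nN : normal_subgroup mul inv e N) (dN : code_of d hr jk).

Lemma foldl_code_step x w : all (mem S) w ->
  foldl (code_step d) (widen_ord jk (coset_idx hr x)) w =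
  widen_ord jk (coset_idx hr (foldl mul x w)).
Proof.
elim: w x => [//|s w IH] x /= /andP [sS wS].
have sSi : (index s S < size S)%N by rewrite index_mem.
have -> : code_step d (widen_ord jk (coset_idx hr x)) s =
    d.1 (Ordinal sSi) (widen_ord jk (coset_idx hr x)) by rewrite /code_step insubT.
rewrite dN.2 nth_index //.
by rewrite (coset_idx_mulr nN _ (coset_idx_rep nN hr _)) IH.
Qed.

Lemma code_run_coset_idx g : code_run d g = widen_ord jk (coset_idx hr g).
Proof.
have [wS gw] := word_ofP g.
by rewrite /code_run dN.1 foldl_code_step // -gw.
Qed.

End CodeOf.

Definition Lambda_code g : {ffun coset_code -> option 'I_k} :=
  [ffun d => if `[< is_code d >] then Some (code_run d g) else None].

Lemma Lambda_code_fibers g h : Lambda_code g = Lambda_code h <-> Lam k (mul (inv g) h).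
Proof.
split=> [gh N nN [j [jk [r hr]]]|hL].
  pose d : coset_code := ([ffun t : 'I_(size S) => [ffun x : 'I_k =>
       if insub (val x) is Some i then widen_ord jk (coset_idx hr (mul (r i) (nth e S t)))
       else x]], widen_ord jk (coset_idx hr e)).
  have dN : code_of d hr jk by split=> // t i; rewrite !ffunE /= valK.
  have := congr1 (fun f : {ffun coset_code -> option 'I_k} => f d) gh.
  rewrite !ffunE asboolT; last by exists N, j, r, hr, jk.
  by rewrite !(code_run_coset_idx nN dN) => -[] /val_inj /(eq_coset_idx nN hr).
apply/ffunP => d; rewrite !ffunE; case: asboolP => // -[N [j [r [hr [jk [nN dN]]]]]].
rewrite !(code_run_coset_idx nN dN); congr (Some (widen_ord _ _)).
by apply/(eq_coset_idx nN hr); apply: hL nN _; exists j; split => //; exists r.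
Qed.

Lemma Lambda_finite_index : finite_index mul inv (Lam k).
Proof. exact: has_index_of_fibers Lambda_code_fibers. Qed.

End LambdaFiniteIndex.

Section LazyWalk.
Variables (S : seq G) (R : realType).
Local Open Scope ring_scope.
Local Open Scope classical_set_scope.
Local Notation steps := (2 * size S)%N.

Definition walk_from x (u : seq nat) : G := foldl (fun y i => mul y (lazy_step e S i)) x u.

Lemma walk_from_cat x u1 u2 : walk_from x (u1 ++ u2) = walk_from (walk_from x u1) u2.
Proof. exact: foldl_cat. Qed.

Lemma walk_from_mul x u : walk_from x u = mul x (walk_from e u).
Proof.
elim: u x => [|i u IH] x /=; first by rewrite mulg1.
by rewrite IH [in RHS]IH mul1g mulgA.
Qed.

Lemma walk_from_stay x n : (0 < size S)%N -> walk_from x (nseq n 0%N) = x.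
Proof. by move=> S_gt0; elim: n => //= n IH; rewrite /lazy_step S_gt0 mulg1. Qed.

Lemma walk_from_word x w : all (mem S) w ->
  walk_from x [seq size S + index s S | s <- w]%N = foldl mul x w.
Proof.
elim: w x => [//|s w IH] x /= /andP [sS wS]; rewrite -IH //.
by rewrite /lazy_step ltnNge leq_addr /= addKn nth_index.
Qed.

Section CosetChain.
Variables (N : G -> Prop) (m : nat) (r : 'I_m -> G).
Hypotheses (nN : normal_subgroup mul inv e N) (hr : coset_reps N r).
Local Notation idx := (coset_idx hr).

(* [steps ^ n] times the [n]-step transition probability from [x] to the
   [i]-th coset of the walk projected to [G / N]. *)
Definition coset_hits n x i : R :=
  \sum_(w : n.-tuple 'I_steps) (idx (walk_from x (map val w)) == i)%:R.

Lemma coset_hits0 x i : coset_hits 0 x i = (idx x == i)%:R.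
Proof. by rewrite /coset_hits sum_tuple0. Qed.

Lemma coset_hitsS n x i :
  coset_hits n.+1 x i = \sum_(t : 'I_steps) coset_hits n (mul x (lazy_step e S t)) i.
Proof. by rewrite /coset_hits sum_tupleS. Qed.

Lemma coset_hits_ge0 n x i : 0 <= coset_hits n x i.
Proof. by apply: sumr_ge0 => w _; rewrite ler0n. Qed.

Lemma coset_hits_rep n x i : coset_hits n x i = coset_hits n (r (idx x)) i.
Proof.
apply: eq_bigr => w _; congr ((_ == i)%:R).
elim: (map val w) x (r (idx x)) (esym (coset_idx_rep nN hr (idx x))) => //= j u IH x y xy.
by apply: IH; apply: coset_idx_mulr.
Qed.

Lemma sum_coset_hits_row n x : \sum_i coset_hits n x i = (steps ^ n)%:R.
Proof.
rewrite exchange_big /= (eq_bigr (fun _ => 1)) => [|w _]; last exact: sum_delta.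
by rewrite sumr_const card_tuple card_ord.
Qed.

Lemma sum_coset_hits_col n i : \sum_j coset_hits n (r j) i = (steps ^ n)%:R.
Proof.
rewrite exchange_big /= (eq_bigr (fun _ => 1)) => [|w _].
  by rewrite sumr_const card_tuple card_ord.
have [j [hj uj]] := coset_idx_mulr_bij nN hr (walk_from e (map val w)) i.
rewrite (bigD1 j) //= walk_from_mul hj eqxx big1 ?addr0 // => j' /negPf j'j.
by rewrite walk_from_mul; case: eqP => // /uj j'E; rewrite -j'E eqxx in j'j.
Qed.

Lemma coset_hitsD k n x i :
  coset_hits (k + n) x i = \sum_j coset_hits k x j * coset_hits n (r j) i.
Proof.
elim: k x => [|k IH] x.
  rewrite add0n coset_hits_rep (bigD1 (idx x)) //= coset_hits0 eqxx mul1r big1 ?addr0 //.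
  by move=> j /negPf jx; rewrite coset_hits0 eq_sym jx mul0r.
rewrite addSn coset_hitsS (eq_bigr _ (fun t _ => IH _)) exchange_big /=.
by apply: eq_bigr => j _; rewrite coset_hitsS mulr_suml.
Qed.

Hypothesis S_gt0 : (0 < size S)%N.
Hypothesis S_gen : forall g, exists w, all (mem S) w /\ g = foldl mul e w.

Lemma coset_hits_pos : exists L, forall j j', 1 <= coset_hits L (r j) j'.
Proof.
pose len j j' := size (word_of S_gen (mul (inv (r j)) (r j'))).
pose L := (\max_(p : 'I_m * 'I_m) len p.1 p.2)%N.
exists L => j j'.
have [wS wE] := word_ofP S_gen (mul (inv (r j)) (r j')).
have len_le : (len j j' <= L)%N by apply: (@leq_bigmax _ (fun p => len p.1 p.2) (j, j')).
pose u := [seq size S + index s S | s <- word_of S_gen (mul (inv (r j)) (r j'))]%N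
          ++ nseq (L - len j j') 0%N.
have [w wu] : exists w : L.-tuple 'I_steps, map val w = u.
  apply: ord_tuple_of_seq; first by rewrite muln_gt0.
    by rewrite size_cat size_map size_nseq subnKC.
  rewrite all_cat all_nseq muln_gt0 S_gt0 orbT andbT all_map; apply/allP => s sw /=.
  by rewrite mul2n -addnn ltn_add2l index_mem; apply: (allP wS).
rewrite /coset_hits (bigD1 w) //= wu walk_from_cat walk_from_stay // walk_from_word //.
rewrite foldl_mul -wE mulKVg coset_idx_rep // eqxx lerDl.
by apply: sumr_ge0 => ? _; exact: ler0n.
Qed.

Lemma lazy_prob_coset_hits n :
  lazy_prob mul e R S N n = coset_hits n e (idx e) / steps%:R ^+ n.
Proof.
rewrite /lazy_prob /lazy_expect mulrC; congr (_ * _); apply: eq_bigr => w _.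
have := eq_coset_idx nN hr e (walk_from e (map val w)); rewrite invg1 mul1g => idx_eq.
case: asboolP => [/idx_eq ->|Nw]; first by rewrite eqxx.
by case: eqP => // /esym /idx_eq.
Qed.

Lemma lazy_prob_normal_cvg : lazy_prob mul e R S N n @[n --> \oo] --> (m%:R^-1 : R).
Proof.
have [L hitsL] := coset_hits_pos.
pose den n : R := steps%:R ^+ n.
have den_gt0 n : 0 < den n by rewrite exprn_gt0 // ltr0n muln_gt0.
have den_neq0 n : den n != 0 by rewrite gt_eqF.
pose v n j := coset_hits n (r j) (idx e) / den n.
pose Q t j j' := coset_hits t (r j) j' / den t.
have -> : lazy_prob mul e R S N = v^~ (idx e).
  by apply: funext => n; rewrite lazy_prob_coset_hits coset_hits_rep.
apply: (@doeblin_cvg_uniform R m v Q L (den L)^-1).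
- move=> t n j; rewrite /v /Q /den exprD invfM coset_hitsD mulr_suml.
  by apply: eq_bigr => j' _; ring.
- by move=> t j j'; rewrite divr_ge0 ?coset_hits_ge0 ?ltW.
- by move=> t j; rewrite -mulr_suml sum_coset_hits_row natrX mulfV.
- by move=> j j'; rewrite /Q -[X in X <= _]mul1r ler_pM2r ?invr_gt0.
- by move=> n; rewrite -mulr_suml sum_coset_hits_col natrX mulfV.
- move=> j; rewrite /v /den expr0 invr1 mulr1 coset_hits0.
  by case: eqP => _; rewrite ?ler01 ?lexx.
- by rewrite invr_gt0.
Qed.

End CosetChain.

End LazyWalk.

Section LazyProb.
Variables (S : seq G) (R : realType).
Local Open Scope ring_scope.

Lemma lazy_prob_ge0 A n : 0 <= lazy_prob mul e R S A n.
Proof.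
rewrite mulr_ge0 ?invr_ge0 ?exprn_ge0 ?ler0n //.
by apply: sumr_ge0 => w _; case: asboolP.
Qed.

Lemma le_lazy_prob (A B : G -> Prop) n : (forall g, A g -> B g) ->
  lazy_prob mul e R S A n <= lazy_prob mul e R S B n.
Proof.
move=> AB; rewrite ler_wpM2l ?invr_ge0 ?exprn_ge0 ?ler0n //.
apply: ler_sum => w _; case: asboolP => [/AB ?|_]; first by rewrite asboolT.
by case: asboolP.
Qed.

Lemma lazy_prob_setD (A B : G -> Prop) n : (forall g, B g -> A g) ->
  lazy_prob mul e R S (fun g => A g /\ ~ B g) n =
  lazy_prob mul e R S A n - lazy_prob mul e R S B n.
Proof.
move=> BA; rewrite -mulrBr -sumrB; congr (_ * _); apply: eq_bigr => w _.
set x := walk mul e S _.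
have [Bx|nBx] := pselect (B x).
  by rewrite asboolF ?(asboolT Bx) ?(asboolT (BA _ Bx)) ?subrr // => -[].
rewrite (asboolF nBx) subr0; have [Ax|nAx] := pselect (A x).
  by rewrite !asboolT.
by rewrite !asboolF // => -[].
Qed.

End LazyProb.

Section Main.
Variables (S : seq G) (R : realType).
Hypotheses (G_infinite : infinite_carrier G) (rf : residually_finite mul inv e).
Hypothesis S_gen : forall g, exists w, all (mem S) w /\ g = foldl mul e w.
Local Open Scope ring_scope.
Local Open Scope classical_set_scope.
Local Notation steps := (2 * size S)%N.
Local Notation idx k := (gindex mul inv (Lam k)).

Lemma size_gen_gt0 : (0 < size S)%N.
Proof.
rewrite lt0n; apply/negP => /eqP/size0nil S0; case: G_infinite; exists [:: e] => g.
by have [[|s w] [+ ->]] := S_gen g; rewrite ?S0 ?mem_head.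
Qed.

Lemma gindex_Lambda_unbounded M : exists K, (M <= idx K)%N.
Proof.
have [l [l_uniq l_size]] := infinite_uniq_seq M G_infinite.
pose K := (\max_(x <- l) \max_(y <- l) D_G mul inv e (mul (inv x) y))%N.
have sep x y : x \in l -> y \in l -> x != y -> ~ Lam K (mul (inv x) y).
  move=> xl yl xy; have xy_neq : mul (inv x) y != e.
    by apply: contra xy => /eqP; rewrite -(mulVg x) => /mulgI ->.
  move/(ltn_D_G rf K xy_neq); rewrite ltnNge => /negP; apply.
  by apply: (bigmaxn_sup_seq x xl) => //; exact: leq_bigmax_seq y yl isT.
have [j [r hr]] := Lambda_finite_index K S_gen.
exists K; rewrite (gindexE (Lambda_normal K) (ex_intro _ r hr)) -l_size.
have inj : {in l &, injective (coset_idx hr)}.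
  move=> x y xl yl /(eq_coset_idx (Lambda_normal K) hr) Kxy.
  by apply/eqP; apply: contrapT => /negP /(sep x y xl yl).
have := max_card (mem (map (coset_idx hr) l)); rewrite card_ord.
by move/card_uniqP: (map_inj_in_uniq inj); rewrite l_uniq => ->; rewrite size_map.
Qed.

Lemma lazy_prob_Lambda_cvg k :
  lazy_prob mul e R S (Lam k) n @[n --> \oo] --> ((idx k)%:R^-1 : R).
Proof.
have [j [r hr]] := Lambda_finite_index k S_gen.
rewrite (gindexE (Lambda_normal k) (ex_intro _ r hr)).
exact: lazy_prob_normal_cvg (Lambda_normal k) hr size_gen_gt0 S_gen.
Qed.

(* [P(X_n = e) <= P(X_n \in Lam K) -> 1 / [G : Lam K]], and these indices are
   unbounded. *)
Lemma lazy_prob_e_cvg0 : lazy_prob mul e R S (eq^~ e) n @[n --> \oo] --> (0 : R).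
Proof.
apply/cvgrPdist_le => eps eps0; have e2 : 0 < eps / 2 by rewrite divr_gt0.
have [K idxK] := gindex_Lambda_unbounded (Num.Def.archi_bound (2 / eps)).
have idx_gt : 2 / eps < (idx K)%:R.
  by apply: lt_le_trans (archi_boundP _) _; rewrite ?ler_nat // divr_ge0 ?ltW.
have idx_inv : (idx K)%:R^-1 <= eps / 2.
  rewrite -[eps / 2]invf_div lef_pV2 ?posrE ?ltW //; last by rewrite divr_gt0.
  by apply: lt_trans idx_gt; rewrite divr_gt0.
have /cvgrPdist_le /(_ _ e2) [N0 _ hN0] := lazy_prob_Lambda_cvg (k := K).
exists N0 => // n /hN0 /=; rewrite ler_norml => /andP [PL _].
have Pe_le : lazy_prob mul e R S (eq^~ e) n <= lazy_prob mul e R S (Lam K) n.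
  by apply: le_lazy_prob => g ->; exact: normal1 (Lambda_normal K).
rewrite sub0r normrN ger0_norm ?lazy_prob_ge0 //; lra.
Qed.

Lemma lazy_prob_Lambda_neq_e_cvg k :
  lazy_prob mul e R S (fun g => Lam k g /\ g <> e) n @[n --> \oo] --> ((idx k)%:R^-1 : R).
Proof.
have eLam g : g = e -> Lam k g by move->; exact: normal1 (Lambda_normal k).
have -> : lazy_prob mul e R S (fun g => Lam k g /\ g <> e) =
    lazy_prob mul e R S (Lam k) \- lazy_prob mul e R S (eq^~ e).
  by apply: funext => n; rewrite (lazy_prob_setD S R _ eLam).
rewrite -[X in _ --> X]subr0.
by apply: cvgB; [exact: lazy_prob_Lambda_cvg | exact: lazy_prob_e_cvg0].
Qed.

Lemma D_G_sum x K : (D_G mul inv e x <= K)%N ->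
  (D_G mul inv e x)%:R = \sum_(k < K) (if `[< Lam k x /\ x <> e >] then 1 else 0) :> R.
Proof.
move=> DK; have [->|xe] := eqVneq x e.
  by rewrite /D_G eqxx big1 // => k _; rewrite asboolF // => -[].
rewrite (eq_bigr (fun k : 'I_K => if (k < D_G mul inv e x)%N then 1 else 0)) => [|k _].
  by rewrite -big_mkcond -(big_ord_widen _ (fun _ => 1) DK) sumr_const card_ord.
case: asboolP => [[/(ltn_D_G rf k xe) -> //]|nLx].
by case: ifP => // /(ltn_D_G rf k xe) Lx; case: nLx; split=> // /eqP; rewrite (negPf xe).
Qed.

Lemma lazy_expect_D_G n : \forall K \near \oo,
  lazy_expect mul e S (fun g => (D_G mul inv e g)%:R : R) n =
  \sum_(0 <= k < K) lazy_prob mul e R S (fun g => Lam k g /\ g <> e) n.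
Proof.
pose D (w : n.-tuple 'I_steps) := D_G mul inv e (walk mul e S (map val w)).
exists (\max_(w : n.-tuple 'I_steps) D w)%N => // K /= DK.
rewrite big_mkord /lazy_prob /lazy_expect -mulr_sumr exchange_big /=; congr (_ * _).
by apply: eq_bigr => w _; apply/D_G_sum/(leq_trans _ DK)/(leq_bigmax (F := D)).
Qed.

End Main.

End GroupTheory.

Local Open Scope ring_scope.
Local Open Scope classical_set_scope.

Theorem proposition4p3 (R : realType) (G : eqType) (mul : G -> G -> G)
  (inv : G -> G) (e : G) (S : seq G) (p : nat -> R) :
  group_axioms mul inv e ->
  infinite_carrier G ->
  residually_finite mul inv e ->
  sym_gen_set mul inv e S ->
  (forall k, (2 <= k)%N -> 0 < p k) ->
  cvg ((\sum_(2 <= k < N) p k) @[N --> \oo]) ->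
  (forall n k, (1 <= n)%N -> (2 <= k)%N ->
     lazy_prob mul e R S (fun g => Lambda mul inv e k g /\ g <> e) n <= p k) ->
  cvg ((\sum_(2 <= k < N) (((gindex mul inv (Lambda mul inv e k))%:R : R)^-1))
         @[N --> \oo]) /\
  (lazy_expect mul e S (fun g => (D_G mul inv e g)%:R : R) n @[n --> \oo] -->
     2 + limn (fun N => \sum_(2 <= k < N) (((gindex mul inv (Lambda mul inv e k))%:R : R)^-1))).
Proof.
move=> ga G_inf rf [_ _ S_gen] _ p_cvg p_dom.
have [||||b_cvg E_cvg] := @tannery R
  (fun n k => lazy_prob mul e R S (fun g => Lambda mul inv e k g /\ g <> e) n)
  (fun k => ((gindex mul inv (Lambda mul inv e k))%:R)^-1) p
  (fun n => lazy_expect mul e S (fun g => (D_G mul inv e g)%:R) n) 2 p_cvg.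
- by move=> n k; exact: lazy_prob_ge0.
- by exists 1%N => // n n1 k k2; exact: p_dom.
- exact: lazy_prob_Lambda_neq_e_cvg.
- exact: lazy_expect_D_G.
split=> //; move: E_cvg.
by rewrite big_ltn // big_nat1 !gindex_Lambda_le1 // invr1.
Qed.
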